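(* Let $\mathbb{G}$ be a topological map embedded in a closed orientable surface of genus $g\ge0$ and let $\ell$ be a tame loop of $\mathbb{G}$. Let $\mathfrak{m}_\ell$ be the real vector space spanned by the Makeenko--Migdal vectors $\mu_v$, $v\in V_\ell$, and the 2-forms $d\omega_e$, $e\notin E_\ell$. Then $$\mathfrak{m}_\ell=\begin{cases}\{\alpha\in\Omega^2(\mathbb{G},\mathbb{R}):\langle\alpha,\mu_*\rangle=0\} & \text{if }[\ell]_\mathbb{R}\neq0,\\ \{\alpha\in\Omega^2(\mathbb{G},\mathbb{R}):\langle\alpha,\mu_*\rangle=\langle\alpha,n_\ell\rangle=0\} & \text{if }[\ell]_\mathbb{R}=0.\end{cases}$$
   Context: A map $\mathbb{G}=(V,E,F)$ is a graph embedded in the surface with all faces homeomorphic to discs; every edge $e$ comes with its reverse $e^{-1}$, and $E_+$ (resp. $F_+$) is a choice of one orientation per edge (resp. the positively oriented faces). $\Omega^0,\Omega^1,\Omega^2$ are the real-valued functions on $V$, on $E$ with $\omega(e^{-1})=-\omega(e)$, and on $F$ with $\mu(f^{-1})=-\mu(f)$; they carry the inner products making $(f_v)_{v\in V}$, $(\omega_e)_{e\in E_+}$, $(\mu_f)_{f\in F_+}$ orthonormal, where $f_v,\omega_e,\mu_f$ are the indicator forms ($\omega_{e^{-1}}=-\omega_e$). $d\omega(f)=\sum_{e\in\partial f}\omega(e)$ (sum over the edges of the boundary loop of $f$), $df(e)=f(\overline e)-f(\underline e)$, and $d^*$ is the adjoint of $d$. $\mu_*$ is the 2-form equal to $1$ on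 every $f\in F_+$. For a path $\ell=e_1\cdots e_n$, $\omega_\ell=\sum_i\omega_{e_i}$. The homology class $[\ell]_\mathbb{R}$ is the class of $\omega_\ell$ in $\ker(d^*:\Omega^1\to\Omega^0)/d^*(\Omega^2)$. If $[\ell]_\mathbb{R}=0$, the winding function $n_\ell\in\Omega^2$ is the unique 2-form with $d^*n_\ell=\omega_\ell$ and $\langle n_\ell,\mu_*\rangle=0$. A tame loop uses each unoriented edge at most once and each vertex at most twice, and at each vertex $v$ visited twice, labelling the four outgoing edges at $v$ used by $\ell$ (up to orientation) as $e_1,e_2,e_3,e_4$ in counterclockwise cyclic order, $\ell$ is cyclically equivalent to a loop of the form $\alpha e_1^{-1}e_3\beta e_2^{-1}e_4\gamma$; $V_\ell$ is the set of such vertices, and the Makeenko--Migdal vector at $v$ is $\mu_v=d\omega_{e_1}+d\omega_{e_3}=-d\omega_{e_2}-d\omega_{e_4}$. $E_\ell$ is the set of edges $e$ such that $\ell$ runs through $e$ or $e^{-1}$. *)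

From HB Require Import structures.
From mathcomp Require Import all_boot all_order all_algebra fingroup perm.
From mathcomp Require Import reals.
Set Implicit Arguments. Unset Strict Implicit. Unset Printing Implicit Defensive.
Import Order.TTheory GRing.Theory Num.Theory.
Local Open Scope ring_scope.

(* A map G = (V,E,F) embedded in a closed orientable surface is encoded as a
   combinatorial map (rotation system):
   - D           : the set E of oriented edges (darts);
   - rev e       : the reverse e^{-1} of e (a fixed-point-free involution);
   - sigma e     : the next outgoing edge after e, counterclockwise, around
                   the source vertex of e.
   Vertices are the sigma-orbits (the vertex of e is its source \underline e,
   the target \overline e is the vertex of rev e).  The positively oriented
   faces are the orbits of  phi := sigma^{-1} \o rev  (the face lying to the
   left of e; its boundary loop is the phi-orbit of e, run counterclockwise).
   Every connected combinatorial map is a map on a closed orientable surface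
   (of genus given by Euler's formula) with disc faces, and conversely. *)

Section Maps.
Variables (D : finType) (rev : D -> D) (sigma : {perm D}).

Definition is_map : Prop :=
  [/\ involutive rev, (forall x, rev x != x) &
      (forall x y, connect [rel a b | (b == sigma a) || (b == rev a)] x y)].

Definition same_vertex (x y : D) : bool := fconnect sigma x y.

Definition phi (x : D) : D := (sigma^-1)%g (rev x).

(* positively oriented faces F_+, represented by the roots of the phi-orbits *)
Definition face := {x : D | froots phi x}.

Variable R : realType.

Definition one_form (w : D -> R) : Prop := forall x, w (rev x) = - w x.

(* inner product on Omega^1: (omega_e)_{e in E_+} orthonormal, i.e.
   <w,w'> = sum_{e in E_+} w e * w' e = 1/2 sum_{e in E} w e * w' e *)
Definition ip1 (w w' : D -> R) : R := 2^-1 * \sum_(x : D) w x * w' x.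

(* Omega^2 : functions on F_+ (extended by mu(f^{-1}) = - mu(f));
   inner product making (mu_f)_{f in F_+} orthonormal *)
Definition ip2 (a b : face -> R) : R := \sum_(f : face) a f * b f.

Definition d1 (w : D -> R) : face -> R :=
  fun f => \sum_(x : D | froot phi x == val f) w x.

Definition mustar : face -> R := fun _ => 1.

Definition omega_e (e : D) : D -> R :=
  fun x => (x == e)%:R - (x == rev e)%:R.

Definition omega_loop (l : seq D) : D -> R :=
  fun x => \sum_(e <- l) omega_e e x.

(* d^* mu = w  (d^* the adjoint of d : Omega^1 -> Omega^2), expressed by
   adjointness: <mu, d b> = <w, b> for every b in Omega^1 *)
Definition dstar2_eq (mu : face -> R) (w : D -> R) : Prop :=
  forall b, one_form b -> ip2 mu (d1 b) = ip1 w b.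

(* [l]_R = 0 : omega_l lies in d^*(Omega^2) *)
Definition homology_zero (l : seq D) : Prop :=
  exists mu : face -> R, dstar2_eq mu (omega_loop l).

End Maps.

Section Loops.
Variables (D : finType) (rev : D -> D) (sigma : {perm D}).

Definition is_loop (l : seq D) : bool :=
  path.cycle (fun x y => same_vertex sigma (rev x) y) l.

Definition visits (l : seq D) (v : D) : nat :=
  count (fun x => same_vertex sigma v x) l.

(* At vertex v: e1,e2,e3,e4 are outgoing edges at v in counterclockwise
   cyclic order, and l is cyclically equivalent to
   alpha e1^{-1} e3 beta e2^{-1} e4 gamma. *)
Definition crossing (l : seq D) (v e1 e2 e3 e4 : D) : Prop :=
  [/\ [&& same_vertex sigma v e1, same_vertex sigma v e2,
          same_vertex sigma v e3 & same_vertex sigma v e4],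
      (0 < findex sigma e1 e2 < findex sigma e1 e3)%N,
      (findex sigma e1 e3 < findex sigma e1 e4)%N &
      exists k (a b c : seq D),
        rot k l = a ++ [:: rev e1; e3] ++ b ++ [:: rev e2; e4] ++ c].

Definition tame (l : seq D) : Prop :=
  [/\ is_loop l,
      (forall x, count_mem x l + count_mem (rev x) l <= 1)%N,
      (forall v, visits l v <= 2)%N &
      (forall v, visits l v = 2%N ->
         exists e1 e2 e3 e4, crossing l v e1 e2 e3 e4)].

Variable R : realType.

Definition MMvec (l : seq D) (m : face rev sigma -> R) : Prop :=
  exists v e1 e2 e3 e4, visits l v = 2%N /\ crossing l v e1 e2 e3 e4 /\
    m =1 (fun f => d1 (omega_e rev R e1) f + d1 (omega_e rev R e3) f).

Definition mgen (l : seq D) (g : face rev sigma -> R) : Prop :=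
  MMvec l g \/
  exists e, [/\ e \notin l, rev e \notin l & g =1 d1 (omega_e rev R e)].

Definition in_m (l : seq D) (a : face rev sigma -> R) : Prop :=
  exists n (c : 'I_n -> R) (g : 'I_n -> face rev sigma -> R),
    (forall i, mgen l (g i)) /\ a =1 (fun f => \sum_(i < n) c i * g i f).

End Loops.

From Pilot Require Import Defs.
From HB Require Import structures.
From mathcomp Require Import all_boot all_order all_algebra fingroup perm.
From mathcomp Require Import reals boolp.
From mathcomp Require Import lra.
Set Implicit Arguments. Unset Strict Implicit. Unset Printing Implicit Defensive.
Import Order.TTheory GRing.Theory Num.Theory.
Local Open Scope ring_scope.

(* m_l is the orthogonal of its orthogonal, so it suffices to describe the
   2-forms u orthogonal to every generator.  This means that the 1-form
   d^*u (u on the face left of an edge minus u on the face to its right)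
   vanishes off E_l and satisfies d^*u(e1) + d^*u(e3) = 0 at each crossing.
   Since d^*u is also co-closed, its flux through each vertex visited by l
   is conserved along both strands of l, so d^*u = c omega_l.  If c != 0 then
   u/c has d^*(u/c) = omega_l and [l] = 0; otherwise (respectively after
   replacing u by u - c n_l) d^*u = 0, so u is constant on the faces of the
   connected map, hence orthogonal to every alpha orthogonal to mu_*. *)

Lemma span_orthK (R : realType) (F : finType) n (g : 'I_n -> F -> R)
    (a : F -> R) :
  (exists c : 'I_n -> R, forall f, a f = \sum_(i < n) c i * g i f) <->
  (forall v : F -> R,
     (forall i, \sum_f g i f * v f = 0) -> \sum_f a f * v f = 0).
Proof.
split=> [[c a_c] v g_v | a_orth].
  under eq_bigr do rewrite a_c mulr_suml.
  rewrite exchange_big big1 // => i _.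
  by under eq_bigr do rewrite -mulrA; rewrite -mulr_sumr g_v mulr0.
set M : 'M[R]_(n, #|F|) := \matrix_(i, j) g i (enum_val j).
have sum_rank (h : 'I_#|F| -> R) : \sum_j h j = \sum_f h (enum_rank f).
  by rewrite (reindex enum_rank) //; apply: onW_bij; apply: enum_rank_bij.
have /submxP [w ar_w] : (\row_j a (enum_val j) <= M)%MS.
  rewrite submxE; apply/eqP/matrixP => i j; rewrite !mxE sum_rank.
  under eq_bigr do rewrite mxE enum_rankK.
  apply: a_orth => k; have /matrixP/(_ k j) := mulmx_coker M.
  rewrite !mxE sum_rank => {2}<-.
  by apply: eq_bigr => f _; congr (_ * _); rewrite /M mxE enum_rankK.
exists (w 0) => f; have /matrixP/(_ 0 (enum_rank f)) := ar_w.
rewrite !mxE enum_rankK => ->.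
by apply: eq_bigr => i _; rewrite /M mxE enum_rankK.
Qed.

Lemma next_cat_cons2 (T : eqType) (s1 s2 : seq T) x y :
  uniq (s1 ++ x :: y :: s2) -> next (s1 ++ x :: y :: s2) x = y.
Proof.
by move=> s_uniq; rewrite -(next_rot (size s1) s_uniq) rot_size_cat /= eqxx.
Qed.

Lemma big_pred_uniq_support (R : nmodType) (T : finType) (P : pred T)
    (s : seq T) (F : T -> R) :
  uniq s -> {subset s <= P} -> (forall x, P x -> x \notin s -> F x = 0) ->
  \sum_(x | P x) F x = \sum_(x <- s) F x.
Proof.
move=> s_uniq sP F0; rewrite big_uniq // (bigID (mem s)) /=.
rewrite [X in _ + X]big1 ?addr0 => [|x /andP[]]; last exact: F0.
apply: eq_bigl => x.
by case: (boolP (x \in s)) => [/sP|]; rewrite ?andbT ?andbF.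
Qed.

Section Map.
Variables (R : realType) (D : finType) (rev : D -> D) (sigma : {perm D}).
Hypothesis revK : involutive rev.

Local Notation phi := (phi rev sigma).
Local Notation face := (face rev sigma).
Local Notation omega_e := (omega_e rev R).
Local Notation same_vertex := (same_vertex sigma).
Local Notation mustar := (@mustar D rev sigma R).

Lemma phi_inj : injective phi.
Proof. by move=> x y /perm_inj /(inv_inj revK). Qed.

Definition face_of (x : D) : face :=
  exist _ (froot phi x) (roots_root (fconnect_sym phi_inj) x).

Lemma face_of_val f : face_of (val f) = f.
Proof. by apply: val_inj => /=; apply/eqP; case: f. Qed.

Lemma face_of_phi x : face_of (phi x) = face_of x.
Proof.
apply: val_inj => /=; symmetry.
by apply/(fingraph.rootP (fconnect_sym phi_inj)); apply: fconnect1.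
Qed.

Lemma face_of_rev x : face_of (rev x) = face_of ((sigma^-1)%g x).
Proof. by rewrite -face_of_phi /Defs.phi revK. Qed.

Definition dstar (u : face -> R) (x : D) : R :=
  u (face_of x) - u (face_of (rev x)).

Lemma dstar_one_form u : one_form rev (dstar u).
Proof. by move=> x; rewrite /dstar revK opprB. Qed.

Lemma dstarZ c u x : dstar (fun f => c * u f) x = c * dstar u x.
Proof. by rewrite /dstar mulrBr. Qed.

Lemma ip2_d1 u w : one_form rev w -> ip2 u (d1 w) = ip1 (dstar u) w.
Proof.
move=> w_one; pose S := \sum_x u (face_of x) * w x.
have -> : ip2 u (d1 w) = S.
  rewrite /ip2 /d1 /S (partition_big face_of xpredT) //=.
  apply: eq_bigr => f _; rewrite mulr_sumr; apply: eq_big => x.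
    by rewrite -val_eqE.
  by move=> /eqP x_f; congr (u _ * _); apply: val_inj.
have S_rev : \sum_x u (face_of (rev x)) * w x = - S.
  rewrite (reindex_inj (inv_inj revK)) -sumrN.
  by apply: eq_bigr => x _; rewrite revK w_one mulrN.
rewrite /ip1 /dstar; under eq_bigr do rewrite mulrBl.
rewrite sumrB S_rev opprK -/S; lra.
Qed.

Lemma omega_e_one_form e : one_form rev (omega_e e).
Proof.
move=> x; rewrite /omega_e opprB (inj_eq (inv_inj revK)).
by rewrite -{1}(revK e) (inj_eq (inv_inj revK)).
Qed.

Lemma ip1_omega_e w e : one_form rev w -> ip1 w (omega_e e) = w e.
Proof.
have sum_eq (h : D -> R) y : \sum_x h x * (x == y)%:R = h y.
  rewrite (bigD1 y) //= eqxx mulr1 big1 ?addr0 // => x /negbTE ->.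
  by rewrite mulr0.
move=> w_one; rewrite /ip1 /omega_e.
under eq_bigr do rewrite mulrBr.
rewrite sumrB !sum_eq w_one; lra.
Qed.

Lemma ip2_d1_omega_e u e : ip2 u (d1 (omega_e e)) = dstar u e.
Proof.
rewrite ip2_d1 ?ip1_omega_e //.
  exact: dstar_one_form.
exact: omega_e_one_form.
Qed.

Lemma dstar2_eqP u w : one_form rev w -> dstar2_eq u w <-> dstar u =1 w.
Proof.
move=> w_one; split=> [u_w e | u_w b b_one].
  by rewrite -ip2_d1_omega_e u_w ?ip1_omega_e //; apply: omega_e_one_form.
by rewrite ip2_d1 // /ip1; congr (_ * _); apply: eq_bigr => x _; rewrite u_w.
Qed.

Lemma omega_loopE l x :
  omega_loop rev R l x = (count_mem x l)%:R - (count_mem (rev x) l)%:R.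
Proof.
elim: l => [|e l IHl]; first by rewrite /omega_loop big_nil subrr.
rewrite /omega_loop big_cons -/(omega_loop _ _ l x) IHl /= !natrD /omega_e.
have -> : (x == rev e) = (e == rev x).
  by rewrite -{1}(revK x) (inj_eq (inv_inj revK)) eq_sym.
rewrite (eq_sym x e); lra.
Qed.

Lemma omega_loop_one_form l : one_form rev (omega_loop rev R l).
Proof. by move=> x; rewrite !omega_loopE revK opprB. Qed.

Lemma sum_dstar_vertex u v : \sum_(x | same_vertex v x) dstar u x = 0.
Proof.
rewrite /dstar sumrB [X in _ - X](reindex_inj (@perm_inj _ sigma)) /=.
apply/eqP; rewrite subr_eq0; apply/eqP/eq_big => [x | x _].
  by rewrite /Defs.same_vertex -(same_fconnect1_r (@perm_inj _ sigma)).
by rewrite face_of_rev permK.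
Qed.

Lemma ip2C (a b : face -> R) : ip2 a b = ip2 b a.
Proof. by apply: eq_bigr => f _; rewrite mulrC. Qed.

Lemma ip2Zr (a b : face -> R) c : ip2 a (fun f => c * b f) = c * ip2 a b.
Proof. by rewrite /ip2 mulr_sumr; apply: eq_bigr => f _; rewrite mulrCA. Qed.

Lemma ip2_d1_omega_e2 u e1 e3 :
  ip2 (fun f => d1 (omega_e e1) f + d1 (omega_e e3) f) u =
  dstar u e1 + dstar u e3.
Proof.
rewrite -!ip2_d1_omega_e /ip2 -big_split.
by apply: eq_bigr => f _; rewrite mulrDl !(mulrC (u f)).
Qed.

Section Loop.
Variable l : seq D.
Hypothesis l_tame : tame rev sigma l.

Lemma tame_uniq : uniq l.
Proof.
case: l_tame => _ l_once _ _; apply: count_mem_uniq => x.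
have := l_once x; rewrite -has_pred1 has_count.
by case: (count _ l) => [|[|n]].
Qed.

Lemma tame_rev_notin x : x \in l -> rev x \notin l.
Proof.
case: l_tame => _ l_once _ _ x_l; have := l_once x.
by rewrite !count_uniq_mem ?tame_uniq // x_l; case: (rev x \in l).
Qed.

Lemma tame_prev_vertex y : y \in l -> same_vertex (rev (prev l y)) y.
Proof. by case: l_tame => l_loop _ _ _; apply: (prev_cycle l_loop). Qed.

Lemma crossing_prev v e1 e2 e3 e4 : crossing rev sigma l v e1 e2 e3 e4 ->
  [/\ e3 \in l, e4 \in l, e3 != e4, prev l e3 = rev e1 & prev l e4 = rev e2].
Proof.
case=> _ _ lt34 [k [s1 [s2 [s3 rot_l]]]].
have prev_at x y s s' : rot k l = s ++ x :: y :: s' -> prev l y = x.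
  move=> rot_l'; have : next l x = y.
    rewrite -(next_rot k tame_uniq) rot_l' next_cat_cons2 // -rot_l'.
    by rewrite rot_uniq tame_uniq.
  by move <-; rewrite prev_next ?tame_uniq.
split.
- by rewrite -(mem_rot k) rot_l !(mem_cat, inE) eqxx !orbT.
- by rewrite -(mem_rot k) rot_l !(mem_cat, inE) eqxx !orbT.
- by apply: contraTneq lt34 => ->; rewrite ltnn.
- exact: prev_at rot_l.
- by apply: (prev_at _ _ (s1 ++ [:: rev e1, e3 & s2]) s3); rewrite rot_l -catA.
Qed.

Section LoopForm.
Variable b : D -> R.
Hypothesis b_one_form : one_form rev b.
Hypothesis b_supp : forall e, e \notin l -> rev e \notin l -> b e = 0.

Lemma sum_vertex_loop v :
  \sum_(x | same_vertex v x) b x =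
  \sum_(y <- l | same_vertex v y) (b y - b (prev l y)).
Proof.
(* The edges at v where b may be nonzero are the edges y of l leaving v and
   the reverses of the edges prev l y of l entering v. *)
pose S := [seq y <- l | same_vertex v y].
pose S' := [seq rev (prev l y) | y <- S].
have S_l : {subset S <= l} by move=> y; rewrite mem_filter => /andP[].
have S_uniq : uniq (S ++ S').
  rewrite cat_uniq map_inj_uniq; last first.
    by move=> y y' /(inv_inj revK) /(can_inj (next_prev tame_uniq)).
  rewrite filter_uniq ?tame_uniq //= andbT; apply/hasPn => _ /mapP[y y_S ->].
  by apply: contra (@S_l _) _; rewrite tame_rev_notin ?mem_prev ?S_l.
have S_vertex : {subset S ++ S' <= same_vertex v}.
  move=> x; rewrite mem_cat => /orP[|/mapP[y]].
    by rewrite mem_filter => /andP[].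
  rewrite mem_filter => /andP[vy y_l] ->; apply: connect_trans vy _.
  by rewrite (fconnect_sym (@perm_inj _ sigma)); apply: tame_prev_vertex.
have S_supp x : same_vertex v x -> x \notin S ++ S' -> b x = 0.
  move=> vx; rewrite mem_cat negb_or => /andP[xS xS']; apply: b_supp.
    by apply: contra xS; rewrite mem_filter vx.
  apply: contra xS' => rx_l; apply/mapP; exists (next l (rev x)).
    rewrite mem_filter mem_next rx_l andbT; apply: connect_trans vx _.
    have := @tame_prev_vertex (next l (rev x)).
    by rewrite mem_next prev_next ?tame_uniq // revK; apply.
  by rewrite prev_next ?tame_uniq ?revK.
rewrite (big_pred_uniq_support S_uniq S_vertex S_supp) big_cat /= big_map.
rewrite -big_split.
by rewrite big_filter; apply: eq_bigr => y _; rewrite b_one_form.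
Qed.

Lemma perm_visits v s :
  uniq s -> {subset s <= [seq y <- l | same_vertex v y]} ->
  visits sigma l v = size s -> perm_eq [seq y <- l | same_vertex v y] s.
Proof.
move=> s_uniq s_sub visits_s.
have size_s : (size [seq y <- l | same_vertex v y] <= size s)%N.
  by rewrite size_filter -visits_s.
have [_ eq_s] := uniq_min_size s_uniq s_sub size_s.
by apply: uniq_perm; rewrite ?filter_uniq ?tame_uniq // => x; rewrite eq_s.
Qed.

Hypothesis b_crossing : forall v e1 e2 e3 e4, visits sigma l v = 2%N ->
  crossing rev sigma l v e1 e2 e3 e4 -> b e1 + b e3 = 0.
Hypothesis b_coclosed : forall v, \sum_(x | same_vertex v x) b x = 0.

Lemma loop_form_prev y : y \in l -> b (prev l y) = b y.
Proof.
move=> y_l; have := b_coclosed y; rewrite sum_vertex_loop -big_filter.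
have y_at_y : y \in [seq z <- l | same_vertex y z].
  by rewrite mem_filter y_l andbT; apply: connect0.
have : (0 < visits sigma l y <= 2)%N.
  rewrite -has_count; case: l_tame => _ _ -> _; rewrite andbT.
  by apply/hasP; exists y => //; apply: connect0.
case visits_y: (visits sigma l y) => [|[|[|n]]] // _.
  have y_only : {subset [:: y] <= [seq z <- l | same_vertex y z]}.
    by move=> z; rewrite inE => /eqP ->.
  rewrite (perm_big _ (perm_visits _ y_only visits_y)) //= big_seq1; lra.
(* At a crossing y is e3 or e4, entered by rev e1 and rev e2: the
   Makeenko--Migdal relation carries b across the strand rev e1, e3, and
   co-closedness at y then across the strand rev e2, e4. *)
have [e1 [e2 [e3 [e4 y_cross]]]] : exists e1 e2 e3 e4,
    crossing rev sigma l y e1 e2 e3 e4 by case: l_tame => _ _ _; apply.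
have [e3_l e4_l e34 prev3 prev4] := crossing_prev y_cross.
have [/and4P[_ _ y_e3 y_e4] _ _ _] := y_cross.
have sub34 : {subset [:: e3; e4] <= [seq z <- l | same_vertex y z]}.
  by move=> z; rewrite !inE => /orP[] /eqP ->; rewrite mem_filter ?y_e3 ?y_e4.
have uniq34 : uniq [:: e3; e4] by rewrite /= inE e34.
have perm34 := perm_visits uniq34 sub34 visits_y.
rewrite (perm_big _ perm34) !big_cons big_nil /= prev3 prev4 !b_one_form.
have := b_crossing visits_y y_cross.
have := perm_mem perm34 y; rewrite y_at_y !inE => /esym/orP[] /eqP ->.
  by rewrite prev3 b_one_form; lra.
by rewrite prev4 b_one_form; lra.
Qed.

Lemma loop_form_const : {in l &, forall x y, b x = b y}.
Proof.
have b_next x : b (next l x) = b x.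
  have [x_l | x_l] := boolP (x \in l); last by rewrite next_nth (negbTE x_l).
  by rewrite -[in RHS](prev_next tame_uniq x) loop_form_prev ?mem_next.
have b_closed x : closed (frel (next l)) [pred y | b y == b x].
  by move=> y z /eqP <-; rewrite !inE b_next.
move=> x y x_l y_l; apply/eqP.
rewrite eq_sym -[_ == _]/(y \in [pred z | b z == b x]).
rewrite -(closed_connect (b_closed x) (_ : fconnect (next l) x y)) ?inE //.
by rewrite (fconnect_cycle (cycle_next tame_uniq) x_l).
Qed.

Lemma loop_form_omega : exists c, forall x, b x = c * omega_loop rev R l x.
Proof.
have [x0 x0_l | l0] := pickP (mem l).
  exists (b x0) => x; rewrite omega_loopE !count_uniq_mem ?tame_uniq //.
  have [x_l | x_l] := boolP (x \in l).
    rewrite (negbTE (tame_rev_notin x_l)) (loop_form_const x_l x0_l).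
    by rewrite subr0 mulr1.
  have [rx_l | rx_l] := boolP (rev x \in l).
    by rewrite -[x]revK b_one_form (loop_form_const rx_l x0_l) sub0r mulrN1.
  by rewrite b_supp // subrr mulr0.
by exists 0 => x; rewrite mul0r b_supp //; apply/negbT; apply: l0.
Qed.

End LoopForm.

Definition orth_m (u : face -> R) : Prop := forall g, mgen l g -> ip2 g u = 0.

Lemma orth_mP u : orth_m u <->
  (forall e, e \notin l -> rev e \notin l -> dstar u e = 0) /\
  (forall v e1 e2 e3 e4, visits sigma l v = 2%N ->
     crossing rev sigma l v e1 e2 e3 e4 -> dstar u e1 + dstar u e3 = 0).
Proof.
split=> [u_orth | [u_supp u_cross] g].
  split=> [e e_l re_l | v e1 e2 e3 e4 v2 cross].
    by rewrite -ip2_d1_omega_e ip2C u_orth //; right; exists e.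
  rewrite -ip2_d1_omega_e2 u_orth //; left; exists v, e1, e2, e3, e4.
  by split=> //; split=> // f.
case=> [[v [e1 [e2 [e3 [e4 [v2 [cross /funext ->]]]]]]]
       | [e [e_l re_l /funext ->]]].
  by rewrite ip2_d1_omega_e2 (u_cross v e1 e2 e3 e4).
by rewrite ip2C ip2_d1_omega_e u_supp.
Qed.

Lemma orth_m_dstar u :
  orth_m u -> exists c, forall x, dstar u x = c * omega_loop rev R l x.
Proof.
case/orth_mP => u_supp u_cross.
apply: loop_form_omega => //; first exact: dstar_one_form.
exact: sum_dstar_vertex.
Qed.

Lemma orth_m_mustar : orth_m mustar.
Proof. by apply/orth_mP; split=> *; rewrite /dstar subrr ?addr0. Qed.

Lemma orth_m_winding n : dstar n =1 omega_loop rev R l -> orth_m n.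
Proof.
move=> n_l; apply/orth_mP; split=> [e e_l re_l | v e1 e2 e3 e4 _ cross].
  rewrite n_l omega_loopE !count_uniq_mem ?tame_uniq //.
  by rewrite (negbTE e_l) (negbTE re_l) subrr.
have [e3_l _ _ prev3 _] := crossing_prev cross.
have re1_l : rev e1 \in l by rewrite -prev3 mem_prev.
have := tame_rev_notin re1_l; rewrite revK => /negbTE e1_l.
rewrite !n_l !omega_loopE !count_uniq_mem ?tame_uniq // re1_l e3_l e1_l.
by rewrite (negbTE (tame_rev_notin e3_l)) sub0r subr0 addNr.
Qed.

Definition mm_index := (D + D * D)%type.

Definition mm_gen (i : mm_index) : face -> R :=
  match i with
  | inl e => d1 (omega_e e)
  | inr (e1, e3) => fun f => d1 (omega_e e1) f + d1 (omega_e e3) f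
  end.

Definition mm_valid (i : mm_index) : Prop :=
  match i with
  | inl e => e \notin l /\ rev e \notin l
  | inr (e1, e3) => exists v e2 e4,
      visits sigma l v = 2%N /\ crossing rev sigma l v e1 e2 e3 e4
  end.

Lemma mgenP g : mgen l g <-> exists2 i, mm_valid i & g = mm_gen i.
Proof.
split=> [[[v [e1 [e2 [e3 [e4 [v2 [cross /funext ->]]]]]]]
         | [e [e_l re_l /funext ->]]]
        | [[e | [e1 e3]] i_valid ->]].
- by exists (inr (e1, e3)) => //; exists v, e2, e4.
- by exists (inl e).
- by right; exists e; case: i_valid.
- case: i_valid => v [e2 [e4 [v2 cross]]]; left; exists v, e1, e2, e3, e4.
  by split=> //; split=> // f.
Qed.

Lemma in_mP a : in_m l a <-> forall u, orth_m u -> ip2 a u = 0.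
Proof.
split=> [[n [c [g [g_m a_g]]]] u u_orth | a_orth].
  exact: (span_orthK g a).1 (ex_intro _ c a_g) u (fun i => u_orth _ (g_m i)).
pose P := [pred i | `[< mm_valid i >]].
have [c a_c] : exists c : 'I_#|P| -> R,
    forall f, a f = \sum_(k < #|P|) c k * mm_gen (enum_val k) f.
  apply/span_orthK => v v_orth; apply: a_orth => g /mgenP[i i_valid ->].
  have Pi : i \in P by apply/asboolP.
  by rewrite -(enum_rankK_in Pi Pi); apply: v_orth.
exists #|P|, c, (fun k => mm_gen (enum_val k)); split=> // k.
by apply/mgenP; exists (enum_val k) => //; apply/asboolP; apply: (enum_valP k).
Qed.

End Loop.

Hypothesis connected :
  forall x y, connect [rel a b | (b == sigma a) || (b == rev a)] x y.

Lemma dstar_eq0_const u : dstar u =1 (fun=> 0) -> forall f f', u f = u f'.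
Proof.
move=> u0; suff u_const x y : u (face_of x) = u (face_of y).
  by move=> f f'; rewrite -(face_of_val f) -(face_of_val f').
have u_rev z : u (face_of (rev z)) = u (face_of z).
  by apply/esym/eqP; rewrite -subr_eq0; apply/eqP/u0.
have u_closed : closed [rel a b | (b == sigma a) || (b == rev a)]
                       [pred z | u (face_of z) == u (face_of x)].
  have u_sigma z : u (face_of (sigma z)) = u (face_of z).
    by rewrite -u_rev face_of_rev permK.
  by move=> a b /orP[] /eqP ->; rewrite !inE ?u_rev ?u_sigma.
have := closed_connect u_closed (connected x y).
by rewrite !inE eqxx => /esym/eqP.
Qed.

Lemma ip2_dstar_eq a u u' :
  ip2 a mustar = 0 -> dstar u =1 dstar u' -> ip2 a u = ip2 a u'.
Proof.
move=> a_mustar u_u'; apply/eqP; rewrite -subr_eq0 /ip2 -sumrB.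
have /dstar_eq0_const w_const : dstar (fun f => u f - u' f) =1 (fun=> 0).
  by move=> x; have := u_u' x; rewrite /dstar; lra.
have [f0 _ | no_face] := pickP (@predT face); last by rewrite big_pred0.
under eq_bigr do rewrite -mulrBr (w_const _ f0).
have sum_a : \sum_f a f = 0.
  by rewrite -[RHS]a_mustar; apply: eq_bigr => f _; rewrite mulr1.
by rewrite -mulr_suml sum_a mul0r.
Qed.

End Map.

Theorem lemma2p14 (R : realType) (D : finType) (rev : D -> D)
  (sigma : {perm D}) (l : seq D) :
  is_map rev sigma -> tame rev sigma l ->
  (~ homology_zero rev sigma R l ->
     forall a : face rev sigma -> R,
       in_m l a <-> ip2 a (@mustar D rev sigma R) = 0) /\
  (forall n : face rev sigma -> R,
     dstar2_eq n (omega_loop rev R l) -> ip2 n (@mustar D rev sigma R) = 0 ->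
     forall a : face rev sigma -> R,
       in_m l a <-> (ip2 a (@mustar D rev sigma R) = 0 /\ ip2 a n = 0)).
Proof.
case=> revK _ connected l_tame.
have orth_m_loop := orth_m_dstar revK l_tame.
split=> [l_nonzero a | n n_l _ a]; rewrite in_mP.
- split=> [a_orth | a_mustar u /orth_m_loop [c u_c]].
    exact/a_orth/(orth_m_mustar revK).
  have c0 : c = 0.
    apply: contra_notP l_nonzero => /eqP c_neq0.
    exists (fun f => c^-1 * u f); apply/(dstar2_eqP revK) => [|x].
      exact: omega_loop_one_form.
    by rewrite dstarZ u_c mulKf.
  rewrite (ip2_dstar_eq (u' := fun f => 0 * u f) connected a_mustar) => [|x].
    by rewrite ip2Zr mul0r.
  by rewrite dstarZ u_c c0 !mul0r.
- have n_dstar : dstar revK n =1 omega_loop rev R l.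
    by apply/(dstar2_eqP revK) => //; apply: omega_loop_one_form.
  split=> [a_orth | [a_mustar a_n] u /orth_m_loop [c u_c]].
    split; apply: a_orth; first exact: (orth_m_mustar revK).
    exact: (orth_m_winding l_tame n_dstar).
  rewrite (ip2_dstar_eq (u' := fun f => c * n f) connected a_mustar) => [|x].
    by rewrite ip2Zr a_n mulr0.
  by rewrite dstarZ u_c n_dstar.
Qed.
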